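(* Work on the jet space with coordinates $t\in\mathbb R$, $\mathbf x,\mathbf v,\mathbf v',\mathbf v''\in\mathbb R^3$, together with parameters $s_0\in\mathbb R$, $\mathbf s\in\mathbb R^3$, and a constant $m$. Let $\cdot$ and $\times$ be the Euclidean dot and cross products on $\mathbb R^3$. Put $$D=(1+\mathbf v\cdot\mathbf v)(s_0^2+\mathbf s\cdot\mathbf s)-(s_0+\mathbf s\cdot\mathbf v)^2 ,$$ and define $$\mathbf E=\frac{\mathbf v''\times(\mathbf s-s_0\mathbf v)}{D^{3/2}}-3\,\frac{(s_0^2+\mathbf s\cdot\mathbf s)\,\mathbf v'\cdot\mathbf v-(s_0+\mathbf s\cdot\mathbf v)\,\mathbf s\cdot\mathbf v'}{D^{5/2}}\,\mathbf v'\times(\mathbf s-s_0\mathbf v)+m\,\frac{(1+\mathbf v\cdot\mathbf v)\mathbf v'-(\mathbf v'\cdot\mathbf v)\mathbf v}{(1+\mathbf v\cdot\mathbf v)^{3/2}(s_0^2+\mathbf s\cdot\mathbf s)^{3/2}}.$$ For arbitrary $\mathbf n,\mathbf q\in\mathbb R^3$, let $\xi_3$ be the vector field $$\begin{aligned}\xi_3={}&-(\mathbf q\cdot\mathbf s)\partial_{s_0}+\big(s_0\mathbf q+\mathbf n\times\mathbf s\big)\cdot\partial_{\mathbf s}-(\mathbf q\cdot\mathbf x)\partial_t+\big(t\mathbf q+\mathbf n\times\mathbf x\big)\cdot\partial_{\mathbf x}\\&+\big(\mathbf q+(\mathbf q\cdot\mathbf v)\mathbf v+\mathbf n\times\mathbf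 v\big)\cdot\partial_{\mathbf v}+\big(2(\mathbf q\cdot\mathbf v)\mathbf v'+(\mathbf q\cdot\mathbf v')\mathbf v+\mathbf n\times\mathbf v'\big)\cdot\partial_{\mathbf v'}\\&+\big(3(\mathbf q\cdot\mathbf v)\mathbf v''+3(\mathbf q\cdot\mathbf v')\mathbf v'+(\mathbf q\cdot\mathbf v'')\mathbf v+\mathbf n\times\mathbf v''\big)\cdot\partial_{\mathbf v''}.\end{aligned}$$ This is the prolongation to $J_3(\mathbb R;\mathbb R^3)$ of the infinitesimal rotation of $\mathbb R^4=\{(t,\mathbf x)\}$ with parameters $\mathbf n,\mathbf q$, extended to act on $(s_0,\mathbf s)$ as a four-vector. Here $\mathbf a\cdot\partial_{\mathbf x}=\sum_a a^a\partial_{x^a}$. Then, applying $\xi_3$ componentwise to $\mathbf E$, $$\xi_3(\mathbf E)=\mathbf n\times\mathbf E+(\mathbf q\cdot\mathbf v)\,\mathbf E-(\mathbf v\cdot\mathbf E)\,\mathbf q .$$ In particular, the third-order system $\mathbf E=0$ is invariant under these (orthogonal) transformations.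
   Context: $\mathbf E$ is the parametrization, with respect to $t=x^0$, of the four-dimensional Euler–Poisson expression $\boldsymbol{\mathcal E}$ of the companion Assertion 1. It is defined on the open set where $D>0$ and $s_0^2+\mathbf s\cdot\mathbf s>0$. *)

From Stdlib Require Import Reals.
Open Scope R_scope.

Record V3 := mkV3 { vx : R ; vy : R ; vz : R }.

Definition vadd (a b : V3) : V3 := mkV3 (vx a + vx b) (vy a + vy b) (vz a + vz b).
Definition vsub (a b : V3) : V3 := mkV3 (vx a - vx b) (vy a - vy b) (vz a - vz b).
Definition vscale (k : R) (a : V3) : V3 := mkV3 (k * vx a) (k * vy a) (k * vz a).
Definition dot (a b : V3) : R := vx a * vx b + vy a * vy b + vz a * vz b.
Definition cross (a b : V3) : V3 :=
  mkV3 (vy a * vz b - vz a * vy b)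
       (vz a * vx b - vx a * vz b)
       (vx a * vy b - vy a * vx b).

(* Points of J_3(R;R^3) x (parameter space (s0, s)):
   coordinates t, x, v, v', v'', s0, s. *)
Record Pt := mkPt { pt : R ; px : V3 ; pv : V3 ; pv1 : V3 ; pv2 : V3 ;
                    ps0 : R ; ps : V3 }.

Definition padd (p w : Pt) : Pt :=
  mkPt (pt p + pt w) (vadd (px p) (px w)) (vadd (pv p) (pv w))
       (vadd (pv1 p) (pv1 w)) (vadd (pv2 p) (pv2 w))
       (ps0 p + ps0 w) (vadd (ps p) (ps w)).
Definition pscale (k : R) (w : Pt) : Pt :=
  mkPt (k * pt w) (vscale k (px w)) (vscale k (pv w)) (vscale k (pv1 w))
       (vscale k (pv2 w)) (k * ps0 w) (vscale k (ps w)).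

Definition Dfun (p : Pt) : R :=
  (1 + dot (pv p) (pv p)) * (ps0 p ^ 2 + dot (ps p) (ps p))
  - (ps0 p + dot (ps p) (pv p)) ^ 2.

(* The expression E (real powers via Rpower, used only where the base is > 0) *)
Definition Efun (m : R) (p : Pt) : V3 :=
  let v := pv p in let v1 := pv1 p in let v2 := pv2 p in
  let s0 := ps0 p in let s := ps p in
  let D := Dfun p in
  let w := vsub s (vscale s0 v) in
  let S := s0 ^ 2 + dot s s in
  vadd (vadd (vscale (/ Rpower D (3/2)) (cross v2 w))
             (vscale (- (3 * ((S * dot v1 v - (s0 + dot s v) * dot s v1)
                               / Rpower D (5/2)))) (cross v1 w)))
       (vscale (m / (Rpower (1 + dot v v) (3/2) * Rpower S (3/2)))
               (vsub (vscale (1 + dot v v) v1) (vscale (dot v1 v) v))).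

Definition xi3 (n q : V3) (p : Pt) : Pt :=
  let x := px p in let v := pv p in let v1 := pv1 p in let v2 := pv2 p in
  let s0 := ps0 p in let s := ps p in let t := pt p in
  mkPt (- dot q x)
       (vadd (vscale t q) (cross n x))
       (vadd (vadd q (vscale (dot q v) v)) (cross n v))
       (vadd (vadd (vscale (2 * dot q v) v1) (vscale (dot q v1) v)) (cross n v1))
       (vadd (vadd (vadd (vscale (3 * dot q v) v2) (vscale (3 * dot q v1) v1))
                   (vscale (dot q v2) v)) (cross n v2))
       (- dot q s)
       (vadd (vscale s0 q) (cross n s)).

Definition vf_apply_is (f : Pt -> R) (p w : Pt) (l : R) : Prop :=
  derivable_pt_lim (fun eps => f (padd p (pscale eps w))) 0 l.

From Stdlib Require Import Reals Lra.
From Coquelicot Require Import Coquelicot.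
Open Scope R_scope.

(* Every ingredient of E transforms homogeneously under xi_3.  With lam = q.v,
   call a scalar f of weight k if xi_3 f = k lam f, and a vector e of weight k if
   xi_3 e = n x e + k lam e - (v.e) q; weights add under products.  D and 1 + v.v
   have weight 2 and s0^2 + s.s has weight 0, so the prefactors D^(-3/2),
   D^(-5/2) and that of the mass term have weights -3, -5 and -3, while
   v' x (s - s0 v) and (1 + v.v) v' - (v'.v) v have weights 3 and 4.  Two pieces
   are homogeneous only up to a defect: xi_3 (v'' x (s - s0 v)) exceeds weight 4
   by 3 (q.v') v' x (s - s0 v), and B = (s0^2 + s.s) v'.v - (s0 + s.v) s.v'
   satisfies xi_3 B = 3 lam B + (q.v') D.  After multiplication by their
   prefactors the two defects cancel, so every term of E has weight 1. *)

Lemma padd_pscale0 (p w : Pt) : padd p (pscale 0 w) = p.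
Proof.
  destruct p as [t [] [] [] [] s0 []]; destruct w as [t' [] [] [] [] s0' []].
  unfold padd, pscale, vadd, vscale; simpl; f_equal; try f_equal; ring.
Qed.

Lemma V3_eq (a b : V3) : vx a = vx b -> vy a = vy b -> vz a = vz b -> a = b.
Proof. destruct a, b; simpl; intros -> -> ->; reflexivity. Qed.

Lemma Rpower_pos (x a : R) : 0 < Rpower x a.
Proof. apply exp_pos. Qed.

Lemma Rpower_1_plus (x a : R) : 0 < x -> Rpower x (1 + a) = x * Rpower x a.
Proof. intro hx; rewrite Rpower_plus, Rpower_1 by exact hx; reflexivity. Qed.

Section DirectionalDerivative.

Variables (p w : Pt).

Lemma vf_apply_is_ext (f g : Pt -> R) (l : R) :
  (forall z, f z = g z) -> vf_apply_is f p w l -> vf_apply_is g p w l.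
Proof.
  unfold vf_apply_is; intros hfg hf; apply is_derive_Reals; apply is_derive_Reals in hf.
  eapply is_derive_ext; [|exact hf]; intro; apply hfg.
Qed.

Lemma vf_apply_is_eq (f : Pt -> R) (l l' : R) :
  vf_apply_is f p w l -> l = l' -> vf_apply_is f p w l'.
Proof. intros hf <-; exact hf. Qed.

Lemma vf_apply_is_affine (f : Pt -> R) (a b : R) :
  (forall e, f (padd p (pscale e w)) = a + e * b) -> vf_apply_is f p w b.
Proof.
  intro hf; unfold vf_apply_is; apply is_derive_Reals.
  eapply is_derive_ext; [intro e; symmetry; apply hf|].
  auto_derive; auto; ring.
Qed.

Lemma vf_apply_is_const (c : R) : vf_apply_is (fun _ => c) p w 0.
Proof. apply vf_apply_is_affine with c; intros; ring. Qed.

Lemma vf_apply_is_plus (f g : Pt -> R) (a b : R) :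
  vf_apply_is f p w a -> vf_apply_is g p w b ->
  vf_apply_is (fun z => f z + g z) p w (a + b).
Proof.
  unfold vf_apply_is; intros hf hg; apply is_derive_Reals.
  apply is_derive_Reals in hf; apply is_derive_Reals in hg.
  exact (is_derive_plus _ _ _ _ _ hf hg).
Qed.

Lemma vf_apply_is_opp (f : Pt -> R) (a : R) :
  vf_apply_is f p w a -> vf_apply_is (fun z => - f z) p w (- a).
Proof.
  unfold vf_apply_is; intro hf; apply is_derive_Reals; apply is_derive_Reals in hf.
  exact (is_derive_opp _ _ _ hf).
Qed.

Lemma vf_apply_is_minus (f g : Pt -> R) (a b : R) :
  vf_apply_is f p w a -> vf_apply_is g p w b ->
  vf_apply_is (fun z => f z - g z) p w (a - b).
Proof.
  unfold vf_apply_is; intros hf hg; apply is_derive_Reals.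
  apply is_derive_Reals in hf; apply is_derive_Reals in hg.
  exact (is_derive_minus _ _ _ _ _ hf hg).
Qed.

Lemma vf_apply_is_mult (f g : Pt -> R) (a b : R) :
  vf_apply_is f p w a -> vf_apply_is g p w b ->
  vf_apply_is (fun z => f z * g z) p w (a * g p + f p * b).
Proof.
  unfold vf_apply_is; intros hf hg; apply is_derive_Reals.
  apply is_derive_Reals in hf; apply is_derive_Reals in hg.
  pose proof (is_derive_mult _ _ _ _ _ hf hg ltac:(intros; apply Rmult_comm)) as hfg.
  simpl in hfg; rewrite !padd_pscale0 in hfg; exact hfg.
Qed.

Lemma vf_apply_is_sqr (f : Pt -> R) (a : R) :
  vf_apply_is f p w a -> vf_apply_is (fun z => f z ^ 2) p w (2 * f p * a).
Proof.
  intro hf; apply vf_apply_is_ext with (fun z => f z * f z); [intro; ring|].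
  eapply vf_apply_is_eq; [apply vf_apply_is_mult; exact hf|ring].
Qed.

Lemma vf_apply_is_inv_Rpower (f : Pt -> R) (l a : R) :
  0 < f p -> vf_apply_is f p w l ->
  vf_apply_is (fun z => / Rpower (f z) a) p w (- a * l / f p * / Rpower (f p) a).
Proof.
  unfold vf_apply_is; intros hpos hf; apply is_derive_Reals; apply is_derive_Reals in hf.
  rewrite <- (padd_pscale0 p w) in hpos.
  set (X := f (padd p (pscale 0 w))) in *.
  replace (f p) with X by (unfold X; rewrite padd_pscale0; reflexivity).
  assert (hpow : is_derive (fun y => Rpower y a) X (a * Rpower X (a - 1)))
    by (apply is_derive_Reals, derivable_pt_lim_power, hpos).
  assert (hX : Rpower X a <> 0) by apply Rgt_not_eq, Rpower_pos.
  pose proof (is_derive_inv _ _ _ (is_derive_comp _ _ 0 _ _ hpow hf) hX) as hinv.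
  simpl in hinv.
  replace (- a * l / X * / Rpower X a)
    with (- scal l (a * Rpower X (a - 1)) / Rpower X a ^ 2).
  { eapply is_derive_ext; [intro; reflexivity|exact hinv]. }
  change (scal l (a * Rpower X (a - 1))) with (l * (a * Rpower X (a - 1))).
  replace (a - 1) with (a + - (1)) by ring.
  rewrite Rpower_plus, Rpower_Ropp, Rpower_1 by exact hpos.
  field; split; [exact hX|lra].
Qed.

Lemma vf_apply_is_inv_Rpower_hom (f : Pt -> R) (c k a : R) :
  0 < f p -> vf_apply_is f p w (k * c * f p) ->
  vf_apply_is (fun z => / Rpower (f z) a) p w (- (a * k) * c * / Rpower (f p) a).
Proof.
  intros hpos hf; eapply vf_apply_is_eq; [apply vf_apply_is_inv_Rpower; eassumption|].
  field; split; apply Rgt_not_eq; [apply Rpower_pos | exact hpos].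
Qed.

Definition vf_apply_vec_is (F : Pt -> V3) (L : V3) : Prop :=
  vf_apply_is (fun z => vx (F z)) p w (vx L) /\
  vf_apply_is (fun z => vy (F z)) p w (vy L) /\
  vf_apply_is (fun z => vz (F z)) p w (vz L).

Lemma vf_apply_vec_is_ext (F G : Pt -> V3) (L : V3) :
  (forall z, F z = G z) -> vf_apply_vec_is F L -> vf_apply_vec_is G L.
Proof.
  intros hFG [hx [hy hz]]; repeat split;
    [eapply vf_apply_is_ext, hx | eapply vf_apply_is_ext, hy | eapply vf_apply_is_ext, hz];
    intro; cbv beta; rewrite hFG; reflexivity.
Qed.

Lemma vf_apply_vec_is_eq (F : Pt -> V3) (L L' : V3) :
  vf_apply_vec_is F L -> L = L' -> vf_apply_vec_is F L'.
Proof. intros hF <-; exact hF. Qed.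

Lemma vf_apply_vec_is_add (F G : Pt -> V3) (L1 L2 : V3) :
  vf_apply_vec_is F L1 -> vf_apply_vec_is G L2 ->
  vf_apply_vec_is (fun z => vadd (F z) (G z)) (vadd L1 L2).
Proof. intros [? [? ?]] [? [? ?]]; repeat split; apply vf_apply_is_plus; auto. Qed.

Lemma vf_apply_vec_is_sub (F G : Pt -> V3) (L1 L2 : V3) :
  vf_apply_vec_is F L1 -> vf_apply_vec_is G L2 ->
  vf_apply_vec_is (fun z => vsub (F z) (G z)) (vsub L1 L2).
Proof. intros [? [? ?]] [? [? ?]]; repeat split; apply vf_apply_is_minus; auto. Qed.

Lemma vf_apply_vec_is_scale (f : Pt -> R) (F : Pt -> V3) (l : R) (L : V3) :
  vf_apply_is f p w l -> vf_apply_vec_is F L ->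
  vf_apply_vec_is (fun z => vscale (f z) (F z)) (vadd (vscale l (F p)) (vscale (f p) L)).
Proof. intros ? [? [? ?]]; repeat split; apply vf_apply_is_mult; auto. Qed.

Lemma vf_apply_vec_is_cross (F G : Pt -> V3) (L1 L2 : V3) :
  vf_apply_vec_is F L1 -> vf_apply_vec_is G L2 ->
  vf_apply_vec_is (fun z => cross (F z) (G z)) (vadd (cross L1 (G p)) (cross (F p) L2)).
Proof.
  intros [? [? ?]] [? [? ?]]; repeat split;
    (eapply vf_apply_is_eq; [apply vf_apply_is_minus; apply vf_apply_is_mult; eauto|]);
    simpl; ring.
Qed.

Lemma vf_apply_is_dot (F G : Pt -> V3) (L1 L2 : V3) :
  vf_apply_vec_is F L1 -> vf_apply_vec_is G L2 ->
  vf_apply_is (fun z => dot (F z) (G z)) p w (dot L1 (G p) + dot (F p) L2).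
Proof.
  intros [? [? ?]] [? [? ?]]; unfold dot;
    (eapply vf_apply_is_eq;
       [repeat apply vf_apply_is_plus; apply vf_apply_is_mult; eauto|]);
    cbv beta; ring.
Qed.

Lemma vf_apply_is_ps0 : vf_apply_is ps0 p w (ps0 w).
Proof. eapply vf_apply_is_affine; intros; reflexivity. Qed.

Lemma vf_apply_vec_is_coord (F : Pt -> V3) :
  (forall z z', F (padd z z') = vadd (F z) (F z')) ->
  (forall k z, F (pscale k z) = vscale k (F z)) ->
  vf_apply_vec_is F (F w).
Proof.
  intros hadd hscale; repeat split; eapply vf_apply_is_affine; intro e;
    rewrite hadd, hscale; reflexivity.
Qed.

Lemma vf_apply_vec_is_pv : vf_apply_vec_is pv (pv w).
Proof. apply vf_apply_vec_is_coord; reflexivity. Qed.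
Lemma vf_apply_vec_is_pv1 : vf_apply_vec_is pv1 (pv1 w).
Proof. apply vf_apply_vec_is_coord; reflexivity. Qed.
Lemma vf_apply_vec_is_pv2 : vf_apply_vec_is pv2 (pv2 w).
Proof. apply vf_apply_vec_is_coord; reflexivity. Qed.
Lemma vf_apply_vec_is_ps : vf_apply_vec_is ps (ps w).
Proof. apply vf_apply_vec_is_coord; reflexivity. Qed.

End DirectionalDerivative.

Ltac vf_derive :=
  repeat match goal with
  | |- vf_apply_is (fun _ => _ - _) _ _ _ => apply vf_apply_is_minus
  | |- vf_apply_is (fun _ => _ + _) _ _ _ => apply vf_apply_is_plus
  | |- vf_apply_is (fun _ => _ * _) _ _ _ => apply vf_apply_is_mult
  | |- vf_apply_is (fun _ => - _) _ _ _ => apply vf_apply_is_opp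
  | |- vf_apply_is (fun _ => _ ^ 2) _ _ _ => apply vf_apply_is_sqr
  | |- vf_apply_is (fun _ => dot _ _) _ _ _ => apply vf_apply_is_dot
  | |- vf_apply_is ps0 _ _ _ => apply vf_apply_is_ps0
  | |- vf_apply_is (fun _ => _) _ _ _ => apply vf_apply_is_const
  | |- vf_apply_vec_is _ _ (fun _ => vsub _ _) _ => apply vf_apply_vec_is_sub
  | |- vf_apply_vec_is _ _ (fun _ => vscale _ _) _ => apply vf_apply_vec_is_scale
  | |- vf_apply_vec_is _ _ (fun _ => cross _ _) _ => apply vf_apply_vec_is_cross
  | |- vf_apply_vec_is _ _ pv _ => apply vf_apply_vec_is_pv
  | |- vf_apply_vec_is _ _ pv1 _ => apply vf_apply_vec_is_pv1
  | |- vf_apply_vec_is _ _ pv2 _ => apply vf_apply_vec_is_pv2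
  | |- vf_apply_vec_is _ _ ps _ => apply vf_apply_vec_is_ps
  end.

Definition Afun (z : Pt) : R := 1 + dot (pv z) (pv z).
Lemma Afun_pos (z : Pt) : 0 < Afun z.
Proof.
  unfold Afun, dot; pose proof (Rle_0_sqr (vx (pv z))); pose proof (Rle_0_sqr (vy (pv z)));
    pose proof (Rle_0_sqr (vz (pv z))); unfold Rsqr in *; lra.
Qed.

Definition Sfun (z : Pt) : R := ps0 z ^ 2 + dot (ps z) (ps z).
Definition Bfun (z : Pt) : R :=
  Sfun z * dot (pv1 z) (pv z) - (ps0 z + dot (ps z) (pv z)) * dot (ps z) (pv1 z).
Definition wvec (z : Pt) : V3 := vsub (ps z) (vscale (ps0 z) (pv z)).
Definition uvec (z : Pt) : V3 :=
  vsub (vscale (Afun z) (pv1 z)) (vscale (dot (pv1 z) (pv z)) (pv z)).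

Definition Ecurv (z : Pt) : V3 :=
  vadd (vscale (/ Rpower (Dfun z) (3/2)) (cross (pv2 z) (wvec z)))
       (vscale (- (3 * (Bfun z / Rpower (Dfun z) (5/2)))) (cross (pv1 z) (wvec z))).
Definition Emass (z : Pt) : V3 :=
  vscale (/ Rpower (Afun z) (3/2)) (vscale (/ Rpower (Sfun z) (3/2)) (uvec z)).

Lemma Efun_split (m : R) (z : Pt) : Efun m z = vadd (Ecurv z) (vscale m (Emass z)).
Proof.
  unfold Efun, Ecurv, Emass, uvec, Bfun, Afun, Sfun, wvec, Rdiv.
  rewrite Rinv_mult; apply V3_eq; simpl; ring.
Qed.

(* Weight-k transformation law of a vector; the theorem is the case k = 1 for E. *)
Definition rot_rhs (k : R) (n q : V3) (p : Pt) (e : V3) : V3 :=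
  vsub (vadd (cross n e) (vscale (k * dot q (pv p)) e)) (vscale (dot (pv p) e) q).

Ltac vec_ring :=
  cbv beta iota zeta delta [rot_rhs vadd vsub vscale cross dot vx vy vz]; f_equal; ring.

Section Xi3Weights.

Variables (n q : V3) (p : Pt).

Local Notation xi := (xi3 n q p).
Local Notation lam := (dot q (pv p)).

Ltac expand_at_p :=
  destruct p as [t [x1 x2 x3] [a1 a2 a3] [b1 b2 b3] [c1 c2 c3] s0 [s1 s2 s3]];
  destruct n as [n1 n2 n3]; destruct q as [q1 q2 q3];
  cbv beta iota zeta delta [xi3 rot_rhs uvec wvec Bfun Dfun Afun Sfun dot cross
                            vadd vsub vscale vx vy vz pt px pv pv1 pv2 ps0 ps].

Lemma xi3_Dfun : vf_apply_is Dfun p xi (2 * lam * Dfun p).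
Proof. eapply vf_apply_is_eq; [unfold Dfun; vf_derive | expand_at_p; ring]. Qed.

Lemma xi3_Afun : vf_apply_is Afun p xi (2 * lam * Afun p).
Proof. eapply vf_apply_is_eq; [unfold Afun; vf_derive | expand_at_p; ring]. Qed.

Lemma xi3_Sfun : vf_apply_is Sfun p xi (0 * lam * Sfun p).
Proof. eapply vf_apply_is_eq; [unfold Sfun; vf_derive | expand_at_p; ring]. Qed.

Lemma xi3_Bfun : vf_apply_is Bfun p xi (3 * lam * Bfun p + dot q (pv1 p) * Dfun p).
Proof.
  eapply vf_apply_is_eq; [unfold Bfun, Sfun; vf_derive | expand_at_p; ring].
Qed.

Lemma xi3_v1_cross_w :
  vf_apply_vec_is p xi (fun z => cross (pv1 z) (wvec z))
    (rot_rhs 3 n q p (cross (pv1 p) (wvec p))).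
Proof.
  eapply vf_apply_vec_is_eq; [unfold wvec; vf_derive | expand_at_p; f_equal; ring].
Qed.

Lemma xi3_v2_cross_w :
  vf_apply_vec_is p xi (fun z => cross (pv2 z) (wvec z))
    (vadd (rot_rhs 4 n q p (cross (pv2 p) (wvec p)))
          (vscale (3 * dot q (pv1 p)) (cross (pv1 p) (wvec p)))).
Proof.
  eapply vf_apply_vec_is_eq; [unfold wvec; vf_derive | expand_at_p; f_equal; ring].
Qed.

Lemma xi3_uvec : vf_apply_vec_is p xi uvec (rot_rhs 4 n q p (uvec p)).
Proof.
  eapply vf_apply_vec_is_eq; [unfold uvec, Afun; vf_derive | expand_at_p; f_equal; ring].
Qed.

Hypotheses (hD : 0 < Dfun p) (hS : 0 < Sfun p).

Lemma xi3_Ecurv : vf_apply_vec_is p xi Ecurv (rot_rhs 1 n q p (Ecurv p)).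
Proof.
  set (D32 := / Rpower (Dfun p) (3/2)).
  assert (hD32 : vf_apply_is (fun z => / Rpower (Dfun z) (3/2)) p xi (-3 * lam * D32)).
  { eapply vf_apply_is_eq;
      [apply vf_apply_is_inv_Rpower_hom; [exact hD | apply xi3_Dfun]|].
    unfold D32; field; apply Rgt_not_eq, Rpower_pos. }
  set (g := - (3 * (Bfun p / Rpower (Dfun p) (5/2)))).
  assert (hg : vf_apply_is (fun z => - (3 * (Bfun z / Rpower (Dfun z) (5/2)))) p xi
                 (-2 * lam * g - 3 * dot q (pv1 p) * D32)).
  { eapply vf_apply_is_eq.
    { apply vf_apply_is_opp, vf_apply_is_mult; [apply vf_apply_is_const|].
      apply vf_apply_is_mult; [apply xi3_Bfun|].
      apply vf_apply_is_inv_Rpower_hom; [exact hD | apply xi3_Dfun]. }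
    assert (hD52 : Rpower (Dfun p) (5/2) = Dfun p * Rpower (Dfun p) (3/2))
      by (replace (5/2) with (1 + 3/2) by field; apply Rpower_1_plus, hD).
    unfold g, D32; rewrite hD52.
    field; split; apply Rgt_not_eq; [apply Rpower_pos | exact hD]. }
  eapply vf_apply_vec_is_eq.
  { apply vf_apply_vec_is_add; apply vf_apply_vec_is_scale;
      eauto using xi3_v2_cross_w, xi3_v1_cross_w. }
  unfold Ecurv; fold D32 g; vec_ring.
Qed.

Lemma xi3_Emass : vf_apply_vec_is p xi Emass (rot_rhs 1 n q p (Emass p)).
Proof.
  assert (hA : vf_apply_is (fun z => / Rpower (Afun z) (3/2)) p xi
                 (-3 * lam * / Rpower (Afun p) (3/2))).
  { eapply vf_apply_is_eq;
      [apply vf_apply_is_inv_Rpower_hom; [apply Afun_pos | apply xi3_Afun]|].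
    field; apply Rgt_not_eq, Rpower_pos. }
  assert (hS32 : vf_apply_is (fun z => / Rpower (Sfun z) (3/2)) p xi 0).
  { eapply vf_apply_is_eq;
      [apply vf_apply_is_inv_Rpower_hom; [exact hS | apply xi3_Sfun]|].
    ring. }
  eapply vf_apply_vec_is_eq.
  { apply vf_apply_vec_is_scale; [exact hA|].
    apply vf_apply_vec_is_scale; [exact hS32 | apply xi3_uvec]. }
  unfold Emass; vec_ring.
Qed.

End Xi3Weights.

Theorem mainTheorem3 (m : R) (n q : V3) (p : Pt)
  (hD : 0 < Dfun p) (hS : 0 < ps0 p ^ 2 + dot (ps p) (ps p)) :
  let rhs := vsub (vadd (cross n (Efun m p)) (vscale (dot q (pv p)) (Efun m p)))
                  (vscale (dot (pv p) (Efun m p)) q) in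
  vf_apply_is (fun z => vx (Efun m z)) p (xi3 n q p) (vx rhs) /\
  vf_apply_is (fun z => vy (Efun m z)) p (xi3 n q p) (vy rhs) /\
  vf_apply_is (fun z => vz (Efun m z)) p (xi3 n q p) (vz rhs).
Proof.
  intro rhs.
  assert (hE : vf_apply_vec_is p (xi3 n q p) (Efun m) (rot_rhs 1 n q p (Efun m p))).
  { apply vf_apply_vec_is_ext with (fun z => vadd (Ecurv z) (vscale m (Emass z)));
      [intro; symmetry; apply Efun_split|].
    eapply vf_apply_vec_is_eq.
    { apply vf_apply_vec_is_add; [apply xi3_Ecurv; exact hD|].
      apply vf_apply_vec_is_scale; [apply vf_apply_is_const | apply xi3_Emass; exact hS]. }
    rewrite (Efun_split m p); vec_ring. }
  replace rhs with (rot_rhs 1 n q p (Efun m p)); [exact hE|].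
  unfold rhs, rot_rhs; rewrite Rmult_1_l; reflexivity.
Qed.
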